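(* For every standard allocation rule $f$, every instance and every seller $i\in S$, we have $r^\star\ge r_i$, where $r^\star$ is the stopping rate of $\mathrm{EnvyFree}(f)$ on the cost vector $c$ and $r_i$ is the stopping rate of $\mathrm{EnvyFree}(f)$ on the cost vector obtained from $c$ by replacing $c_i$ with $0$.
   Context: Setting: a buyer with budget $B>0$ faces a finite set $S$ of sellers; seller $i$ owns one divisible item giving utility $u_i>0$ and has cost $c_i\ge0$. A standard allocation rule is a non-increasing $f:[0,\infty)\to[0,1]$ with $f(0)=1$, $f(e-1)=0$. For $r>0$: $f_r(x)=f(x/r)$, $Q_r(x)=xf_r(x)+\int_x^\infty f_r(y)\,dy$, $P_{i,r}(x)=u_iQ_r(x/u_i)$. The stopping rate of $\mathrm{EnvyFree}(f)$ on a cost vector $c'$ is the value at which, decreasing $r$ from $\infty$, the nondecreasing function $r\mapsto\sum_iP_{i,r}(c'_i)$ first equals $B$. *)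

From HB Require Import structures.
From mathcomp Require Import all_boot all_order all_algebra.
From mathcomp Require Import all_classical all_reals all_analysis.
Set Implicit Arguments. Unset Strict Implicit. Unset Printing Implicit Defensive.
Import Order.TTheory GRing.Theory Num.Theory.
Local Open Scope classical_set_scope.
Local Open Scope ring_scope.

Section Defs.
Context {R : realType}.

(* A standard allocation rule f : [0,oo) -> [0,1], non-increasing,
   f(0) = 1 and f(e-1) = 0.  Values of f outside [0,oo) are irrelevant. *)
Definition standard_alloc (f : R -> R) : Prop :=
  [/\ (forall x y, 0 <= x -> x <= y -> f y <= f x),
      (forall x, 0 <= x -> 0 <= f x <= 1),
      f 0 = 1 &
      f (expR 1 - 1) = 0].

Definition f_r (f : R -> R) (r x : R) : R := f (x / r).

Definition Q_r (f : R -> R) (r x : R) : \bar R :=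
  ((x * f_r f r x)%:E +
   \int[@lebesgue_measure R]_(y in `[x, +oo[%classic) (f_r f r y)%:E)%E.

Definition P_r (f : R -> R) (ui r x : R) : \bar R :=
  (ui%:E * Q_r f r (x / ui))%E.

Definition total_P (S : finType) (f : R -> R) (u c' : S -> R) (r : R) : \bar R :=
  (\sum_(i : S) P_r f (u i) r (c' i))%E.

(* r is the stopping rate of EnvyFree(f) on cost vector c': decreasing r from
   oo, r is the first value at which total_P equals B. *)
Definition is_stopping_rate (S : finType) (f : R -> R) (u c' : S -> R)
    (B r : R) : Prop :=
  0 < r /\ total_P f u c' r = B%:E /\
  (forall r', r < r' -> total_P f u c' r' <> B%:E).

Definition zero_at (S : finType) (c : S -> R) (i : S) : S -> R :=
  fun j => if j == i then 0 else c j.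

End Defs.

From HB Require Import structures.
From mathcomp Require Import all_boot all_order all_algebra.
From mathcomp Require Import all_classical all_reals all_analysis measurable_realfun.
Import Order.TTheory GRing.Theory Num.Theory.
Local Open Scope ring_scope.
Local Open Scope classical_set_scope.

(* Proof: [Q_r x] is nondecreasing in the rate [r] (since [f_r] is) and
   maximal at [x = 0] (the rectangle [x f_r(x)] is dominated by the integral
   of [f_r] over [[0, x]]).  Hence [total_P c r <= total_P (zero_at c i) r]
   for every rate, and [total_P c] is nondecreasing.  If [rstar < ri], then
   [B = total_P c rstar <= total_P c ri <= total_P (zero_at c i) ri = B],
   so [total_P c] hits [B] at a rate above [rstar], contradicting the choice
   of [rstar]. *)

Section AllocationRule.
Context {R : realType} (f : R -> R).
Hypothesis sf : standard_alloc f.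

Lemma f_r_ge0 (r y : R) : 0 < r -> 0 <= y -> 0 <= f_r f r y.
Proof.
by case: sf => _ f01 _ _ r0 y0; case/andP: (f01 _ (divr_ge0 y0 (ltW r0))).
Qed.

Lemma f_r_homo_rate (r1 r2 y : R) : 0 < r1 -> r1 <= r2 -> 0 <= y ->
  f_r f r1 y <= f_r f r2 y.
Proof.
case: sf => fni _ _ _ r10 r12 y0; have r20 := lt_le_trans r10 r12.
apply: fni; first by rewrite divr_ge0 // ltW.
by rewrite ler_wpM2l // lef_pV2 ?posrE.
Qed.

Lemma f_r_antihomo (r y z : R) : 0 < r -> 0 <= y -> y <= z ->
  f_r f r z <= f_r f r y.
Proof.
case: sf => fni _ _ _ r0 y0 yz; apply: fni; first by rewrite divr_ge0 // ltW.
by rewrite ler_pM2r ?invr_gt0.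
Qed.

Lemma measurable_f_r (r x : R) : 0 < r -> 0 <= x ->
  measurable_fun `[x, +oo[ (fun y => (f_r f r y)%:E).
Proof.
move=> r0 x0; apply/(measurable_EFinP _ (f_r f r)).
(* [f] is only antitone on [[0, +oo[], so clamp the argument at [0] to get a
   globally antitone function agreeing with [f_r] on [[x, +oo[]. *)
have clampE : {in `[x, +oo[, (fun y => f_r f r (Num.max 0 y)) =1 f_r f r}.
  move=> y; rewrite inE /= in_itv /= andbT => xy.
  by rewrite max_r // (le_trans x0 xy).
apply: eq_measurable_fun clampE _; apply: nonincreasing_measurable => // s t st.
apply: f_r_antihomo => //; first by rewrite le_max lexx.
by rewrite ge_max !le_max lexx st !orbT.
Qed.

Lemma Q_r_homo_rate (r1 r2 x : R) : 0 < r1 -> r1 <= r2 -> 0 <= x ->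
  (Q_r f r1 x <= Q_r f r2 x)%E.
Proof.
move=> r10 r12 x0; have r20 := lt_le_trans r10 r12.
apply: leeD; first by rewrite lee_fin ler_wpM2l // f_r_homo_rate.
have inx y : y \in `[x, +oo[%R -> 0 <= y.
  by rewrite in_itv /= andbT; exact: le_trans x0.
apply: ge0_le_integral => //.
- by move=> y /inx y0; rewrite lee_fin f_r_ge0.
- exact: measurable_f_r.
- exact: measurable_f_r.
- by move=> y /inx y0; rewrite lee_fin f_r_homo_rate.
Qed.

Lemma rectangle_le_integral_f_r (r x : R) : 0 < r -> 0 <= x ->
  ((x * f_r f r x)%:E <=
   \int[@lebesgue_measure R]_(y in `[0%R, x[) (f_r f r y)%:E)%E.
Proof.
move=> r0 x0.
have measure_itv : lebesgue_measure (`[0, x[ : set R) = x%:E.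
  rewrite lebesgue_measure_itv /= lte_fin.
  by case: ltgtP x0 => // [x0' _|<- _]; rewrite ?sube0 // -EFinB subr0.
rewrite mulrC EFinM -measure_itv -integral_cst //.
apply: ge0_le_integral => //.
- by move=> y _; rewrite lee_fin f_r_ge0.
- apply: measurable_funS (@measurable_f_r r 0 r0 (lexx 0)) => //.
  by move=> y /=; rewrite !in_itv /= => /andP[-> _].
- move=> y /=; rewrite in_itv /= => /andP[y0 yx].
  by rewrite lee_fin f_r_antihomo // ltW.
Qed.

Lemma Q_r_le_Q_r0 (r x : R) : 0 < r -> 0 <= x -> (Q_r f r x <= Q_r f r 0)%E.
Proof.
move=> r0 x0; rewrite /Q_r mul0r add0e.
have splitE : `[0, +oo[ = `[0, x[ `|` `[x, +oo[ :> set R.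
  by rewrite -itv_bndbnd_setU // bnd_simp.
rewrite splitE ge0_integral_setU //.
- by apply: leeD2r; exact: rectangle_le_integral_f_r.
- by rewrite -splitE; exact: measurable_f_r.
- move=> y; rewrite -splitE /= in_itv /= andbT => y0.
  by rewrite lee_fin f_r_ge0.
- apply: lt_disjoint => a b; rewrite !in_itv /= andbT => /andP[_ ax] xb.
  exact: lt_le_trans ax xb.
Qed.

Variables (S : finType) (u c : S -> R).
Hypotheses (u_gt0 : forall j, 0 < u j) (c_ge0 : forall j, 0 <= c j).

Lemma total_P_homo_rate (r1 r2 : R) : 0 < r1 -> r1 <= r2 ->
  (total_P f u c r1 <= total_P f u c r2)%E.
Proof.
move=> r10 r12; apply: lee_sum => j _.
apply: lee_wpmul2l; first by rewrite lee_fin ltW.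
by apply: Q_r_homo_rate; rewrite // divr_ge0 // ltW.
Qed.

Lemma total_P_le_zero_at (i : S) (r : R) : 0 < r ->
  (total_P f u c r <= total_P f u (zero_at c i) r)%E.
Proof.
move=> r0; apply: lee_sum => j _; rewrite /P_r /zero_at.
case: eqP => _ //; rewrite mul0r.
apply: lee_wpmul2l; first by rewrite lee_fin ltW.
by apply: Q_r_le_Q_r0; rewrite // divr_ge0 // ltW.
Qed.

End AllocationRule.

Theorem lemma1 (R : realType) (S : finType) (f : R -> R) (B : R)
    (u c : S -> R) (i : S) (rstar ri : R) :
  standard_alloc f ->
  0 < B ->
  (forall j, 0 < u j) ->
  (forall j, 0 <= c j) ->
  is_stopping_rate f u c B rstar ->
  is_stopping_rate f u (zero_at c i) B ri ->
  ri <= rstar.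
Proof.
move=> sf _ u0 c0 [rs0 [Pc_rstar rstar_first]] [ri0 [Pzero_ri _]].
rewrite leNgt; apply/negP => rstar_lt_ri; apply: (rstar_first ri rstar_lt_ri).
apply: le_anti; apply/andP; split.
- by rewrite -Pzero_ri; exact: total_P_le_zero_at.
- by rewrite -Pc_rstar; apply: total_P_homo_rate => //; exact: ltW.
Qed.
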